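(* Fix range parameters $0<L_I\le U_I$ and $0\le L_V\le U_V$, and let $\alpha=(a_1,\dots,a_w)$. Let $a_i,a_j\in\mathbb{L}^{t+1}_\alpha$ with $a_i$ to the left of $a_j$. Suppose both have leftmost partially-proper items, $a_{i'}$ and $a_{j'}$ respectively, in $\mathbb{L}^t_\alpha$. Then $a_{i'}$ equals $a_{j'}$ or is to the left of $a_{j'}$.
   Context: Let $\alpha=(a_1,\dots,a_w)$ be a finite sequence of real numbers, with items identified by their positions. Increasing subsequences are non-strict. $a_j$ is compatible with $a_i$ if $j<i$ and $a_j\le a_i$. $RL_\alpha(a)$ is the maximum length of an increasing subsequence ending at $a$. $a_j$ is a predecessor of $a_i$ if it is compatible with $a_i$ and $RL_\alpha(a_j)=RL_\alpha(a_i)-1$. The horizontal list $\mathbb{L}^t_\alpha$ is the list of items of rising length $t$, ordered by position; ''left of'' means earlier position. Items are colored black or non-black recursively by level: all items of $\mathbb{L}^1_\alpha$ are non-black, and an item of $\mathbb{L}^{t+1}_\alpha$ is non-black iff it has a range-proper predecessor. Here a range-proper predecessor of $a_i$ is a non-black predecessor $a_k$ with $L_V\le a_i-a_k\le U_V$ and $L_I\le i-k\le U_I$. For $a_i\in\mathbb{L}^{t+1}_\alpha$, its leftmost partially-proper item is the leftmost non-black item $a_k\in\mathbb{L}^t_\alpha$ with $L_V\le a_i-a_k$ and $i-k\le U_I$, if one exists. *)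

From HB Require Import structures.
From mathcomp Require Import all_boot all_order all_algebra.
Set Implicit Arguments. Unset Strict Implicit. Unset Printing Implicit Defensive.
Import Order.TTheory GRing.Theory Num.Theory.
Local Open Scope ring_scope.

Section Levels.
Variable R : realFieldType.
(* the sequence alpha = (a_1,...,a_w); items are identified by their
   positions, here 0-based ordinals of 'I_w (differences are unaffected). *)
Variable s : seq R.
Local Notation w := (size s).
Definition itm (i : 'I_w) : R := nth 0 s i.

Definition inc_set (S : {set 'I_w}) : bool :=
  [forall j in S, forall k in S, (j < k)%N ==> (itm j <= itm k)].

Definition RL (i : 'I_w) : nat :=
  \max_(S : {set 'I_w} | [&& i \in S, [forall j in S, (j <= i)%N] & inc_set S])
     #|S|.

Definition compatible (j i : 'I_w) : bool := (j < i)%N && (itm j <= itm i).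

Definition predecessor (j i : 'I_w) : bool :=
  compatible j i && (RL j == (RL i).-1)%N.

Definition inL (t : nat) (i : 'I_w) : bool := RL i == t.

Variables (L_I U_I : nat) (L_V U_V : R).

Definition in_range (k i : 'I_w) : bool :=
  [&& L_V <= itm i - itm k, itm i - itm k <= U_V &
      (L_I <= i - k <= U_I)%N].

(* NB t i  <=>  a_i is in L^t and is non-black (coloring defined by level) *)
Fixpoint NB (t : nat) (i : 'I_w) : bool :=
  match t with
  | 0 => false
  | t'.+1 => inL t'.+1 i &&
      (match t' with
       | 0 => true
       | _ => [exists k : 'I_w, [&& predecessor k i, NB t' k & in_range k i]]
       end)
  end.

Definition nonblack (i : 'I_w) : bool := NB (RL i) i.

Definition partially_proper (t : nat) (i k : 'I_w) : bool :=
  [&& NB t k, L_V <= itm i - itm k & (i%:Z - k%:Z <= U_I%:Z)%R].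

Definition leftmost_pp (t : nat) (i k : 'I_w) : bool :=
  partially_proper t i k &&
  [forall k' : 'I_w, partially_proper t i k' ==> (k <= k')%N].

End Levels.

(* Rising length strictly increases along compatible pairs, so two items of
   the same horizontal list with a_i left of a_j satisfy a_j < a_i.  Hence the
   partially-proper item a_j' of a_j is also partially proper for a_i: its
   value gap only grows (a_i - a_j' > a_j - a_j' >= L_V) and its index gap only
   shrinks (i - j' < j - j' <= U_I).  Leftmostness of a_i' then gives i' <= j'. *)
From HB Require Import structures.
From mathcomp Require Import all_boot all_order all_algebra.
Set Implicit Arguments. Unset Strict Implicit. Unset Printing Implicit Defensive.
Import Order.TTheory GRing.Theory Num.Theory.
Local Open Scope ring_scope.

Section RisingLength.
Variables (R : realFieldType) (s : seq R).
Local Notation w := (size s).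

Definition inc_set_ending_at (i : 'I_w) (S : {set 'I_w}) : bool :=
  [&& i \in S, [forall j in S, (j <= i)%N] & inc_set S].

Lemma inc_set_ending_at1 (i : 'I_w) : inc_set_ending_at i [set i].
Proof.
rewrite /inc_set_ending_at set11 /=; apply/andP; split.
  by apply/forall_inP => k /set1P ->.
apply/forall_inP => a /set1P ->; apply/forall_inP => b /set1P ->.
by rewrite ltnn.
Qed.

Lemma RL_witness (i : 'I_w) :
  exists2 S, inc_set_ending_at i S & RL i = #|S|.
Proof.
have hne : (0 < #|[pred S | inc_set_ending_at i S]|)%N.
  by apply/card_gt0P; exists [set i]; rewrite inE inc_set_ending_at1.
have [S hS eqS] := eq_bigmax_cond (fun S : {set 'I_w} => #|S|) hne.
by exists S; rewrite // inE in hS.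
Qed.

Lemma card_le_RL (i : 'I_w) (S : {set 'I_w}) :
  inc_set_ending_at i S -> (#|S| <= RL i)%N.
Proof. exact: (@leq_bigmax_cond _ _ (fun S : {set 'I_w} => #|S|)). Qed.

Lemma inc_set_ending_atU1 (i j : 'I_w) (S : {set 'I_w}) :
  compatible i j -> inc_set_ending_at i S -> inc_set_ending_at j (j |: S).
Proof.
case/andP=> lt_ij le_ij /and3P[iS leS incS].
have ltSj k : k \in S -> (k < j)%N.
  by move=> kS; exact: leq_ltn_trans (forall_inP leS k kS) lt_ij.
have leSi k : k \in S -> itm k <= itm i.
  move=> kS; have := forall_inP leS k kS; rewrite leq_eqVlt => /orP[/eqP|] h.
    by rewrite (val_inj h).
  by have := forall_inP (forall_inP incS k kS) i iS; rewrite h.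
apply/and3P; split; first exact: setU11.
  by apply/forall_inP => k /setU1P[-> // | /ltSj/ltnW].
apply/forall_inP => a /setU1P[-> | aS]; apply/forall_inP => b /setU1P[-> | bS].
- by rewrite ltnn.
- by rewrite ltnNge ltnW ?ltSj.
- by apply/implyP => _; exact: le_trans (leSi a aS) le_ij.
- exact: forall_inP (forall_inP incS a aS) b bS.
Qed.

Lemma RL_compatible_lt (i j : 'I_w) : compatible i j -> (RL i < RL j)%N.
Proof.
move=> cij; have [S hS ->] := RL_witness i.
have jS : j \notin S.
  case/and3P: hS => _ leS _; case/andP: cij => lt_ij _.
  by apply/negP => /(forall_inP leS); rewrite leqNgt lt_ij.
by have := card_le_RL (inc_set_ending_atU1 cij hS); rewrite cardsU1 jS.
Qed.

Lemma inL_lt_itm (t : nat) (i j : 'I_w) :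
  inL t i -> inL t j -> (i < j)%N -> itm j < itm i.
Proof.
move=> /eqP RLi /eqP RLj lt_ij; rewrite ltNge; apply/negP => le_ij.
have cij : compatible i j by rewrite /compatible lt_ij le_ij.
by have := RL_compatible_lt cij; rewrite RLi RLj ltnn.
Qed.

Lemma partially_proper_left (L_I U_I : nat) (L_V U_V : R) (t : nat)
    (i j k : 'I_w) :
  (i < j)%N -> itm j <= itm i ->
  partially_proper L_I U_I L_V U_V t j k -> partially_proper L_I U_I L_V U_V t i k.
Proof.
move=> lt_ij le_ij /and3P[nbk hV hI]; apply/and3P; split => //.
  by apply: le_trans hV _; rewrite lerD2r.
by apply: le_trans hI; rewrite lerD2r lez_nat ltnW.
Qed.

End RisingLength.

Theorem mainTheorem14 (R : realFieldType) (s : seq R)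
  (L_I U_I : nat) (L_V U_V : R)
  (hLI : (0 < L_I)%N) (hIU : (L_I <= U_I)%N)
  (hLV : 0 <= L_V) (hVU : L_V <= U_V)
  (t : nat) (i j i' j' : 'I_(size s))
  (hi : inL t.+1 i) (hj : inL t.+1 j) (hij : (i < j)%N)
  (hi' : leftmost_pp L_I U_I L_V U_V t i i')
  (hj' : leftmost_pp L_I U_I L_V U_V t j j') :
  (i' <= j')%N.
Proof.
have lt_ji : itm j < itm i := inL_lt_itm hi hj hij.
have pp_ij' : partially_proper L_I U_I L_V U_V t i j'.
  exact: partially_proper_left hij (ltW lt_ji) (proj1 (andP hj')).
by case/andP: hi' => _ /forallP /(_ j') /implyP; apply.
Qed.
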